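(* Let $G$ be a group and $H\subseteq G$ a maximal subgroup which is non-abelian simple, of finite index $p=[G:H]$, and suppose $G$ contains an element of order $p$. If the inclusion $H\subseteq G$ is a localization, then $G$ is simple.
   Context: A group homomorphism $i\colon H\to G$ is a localization if for every homomorphism $\varphi\colon H\to G$ there exists a unique homomorphism $\psi\colon G\to G$ with $\psi\circ i=\varphi$; for $H\subseteq G$, ''$H\subseteq G$ is a localization'' means the inclusion map is. *)

From Stdlib Require Import Arith.

Record Group := {
  car :> Type;
  gmul : car -> car -> car;
  gone : car;
  ginv : car -> car;
  gmulA : forall x y z, gmul x (gmul y z) = gmul (gmul x y) z;
  gmul1l : forall x, gmul gone x = x;
  gmul1r : forall x, gmul x gone = x;
  gmulVl : forall x, gmul (ginv x) x = gone;
  gmulVr : forall x, gmul x (ginv x) = gone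
}.

Arguments gmul {_} x y.
Arguments gone {_}.
Arguments ginv {_} x.

Fixpoint gpow {G : Group} (x : G) (n : nat) : G :=
  match n with O => gone | S m => gmul x (gpow x m) end.

Definition is_subgroup {G : Group} (S : G -> Prop) : Prop :=
  S gone /\ (forall x y, S x -> S y -> S (gmul x y)) /\ (forall x, S x -> S (ginv x)).

Definition normal_in {G : Group} (N K : G -> Prop) : Prop :=
  is_subgroup N /\ (forall x, N x -> K x) /\
  (forall k n, K k -> N n -> N (gmul (gmul k n) (ginv k))).

Definition simple_sub {G : Group} (K : G -> Prop) : Prop :=
  is_subgroup K /\ (exists x, K x /\ x <> gone) /\
  forall N, normal_in N K -> (forall x, N x -> x = gone) \/ (forall x, K x -> N x).

Definition nonabelian_sub {G : Group} (K : G -> Prop) : Prop :=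
  exists x y, K x /\ K y /\ gmul x y <> gmul y x.

Definition simple_group (G : Group) : Prop := simple_sub (fun _ : G => True).

Definition maximal_sub {G : Group} (H : G -> Prop) : Prop :=
  is_subgroup H /\ (exists g, ~ H g) /\
  forall K, is_subgroup K -> (forall x, H x -> K x) ->
    (forall x, K x -> H x) \/ (forall x, K x).

(* [G:H] = p : there are p left-coset representatives r 0, ..., r (p-1)
   whose cosets r i H are pairwise distinct and cover G. *)
Definition has_index {G : Group} (H : G -> Prop) (p : nat) : Prop :=
  exists r : nat -> G,
    (forall g, exists i, i < p /\ H (gmul (ginv (r i)) g)) /\
    (forall i j, i < p -> j < p -> H (gmul (ginv (r i)) (r j)) -> i = j).

Definition has_order {G : Group} (x : G) (p : nat) : Prop :=
  0 < p /\ gpow x p = gone /\ (forall k, 0 < k -> k < p -> gpow x k <> gone).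

(* Group homomorphism from the subgroup H into G, represented by a function
   G -> G whose values off H are irrelevant. *)
Definition hom_on {G : Group} (H : G -> Prop) (f : G -> G) : Prop :=
  forall x y, H x -> H y -> f (gmul x y) = gmul (f x) (f y).

Definition endo {G : Group} (f : G -> G) : Prop := hom_on (fun _ => True) f.

Definition localization {G : Group} (H : G -> Prop) : Prop :=
  forall phi : G -> G, hom_on H phi ->
    (exists psi, endo psi /\ forall x, H x -> psi x = phi x) /\
    (forall psi1 psi2, endo psi1 -> endo psi2 ->
       (forall x, H x -> psi1 x = phi x) -> (forall x, H x -> psi2 x = phi x) ->
       forall g, psi1 g = psi2 g).

(* Let N be a nontrivial normal subgroup of G. Since H is simple, N ∩ H is
   trivial or all of H.  If N ∩ H = 1, maximality of H gives G = N ⋊ H, and the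
   projection G → H is an endomorphism extending the identity of H; by
   uniqueness of extensions it is the identity of G, so N = 1.  If H ⊆ N, then
   N = G unless N = H is normal; in that case H has a coset g^i H for every
   residue i mod p, G/H is cyclic of order p, and g^i h ↦ x^i (x of order p) is
   a nontrivial endomorphism extending the trivial map on H, again contradicting
   uniqueness. *)

From Stdlib Require Import Arith Lia List Classical ClassicalEpsilon Wf_nat.

Infix "**" := gmul (at level 40, left associativity).

Section GroupFacts.
Context {G : Group}.
Implicit Types x y z : G.

Lemma mulKg x y : ginv x ** (x ** y) = y.
Proof. now rewrite gmulA, gmulVl, gmul1l. Qed.

Lemma mulgK x y : x ** y ** ginv y = x.
Proof. now rewrite <- gmulA, gmulVr, gmul1r. Qed.

Lemma mulgKV x y : x ** ginv y ** y = x.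
Proof. now rewrite <- gmulA, gmulVl, gmul1r. Qed.

Lemma invg_uniq x y : x ** y = gone -> ginv x = y.
Proof. intro E. rewrite <- (mulKg x y), E. symmetry. apply gmul1r. Qed.

Lemma invgK x : ginv (ginv x) = x.
Proof. apply invg_uniq, gmulVl. Qed.

Lemma invMg x y : ginv (x ** y) = ginv y ** ginv x.
Proof. apply invg_uniq. now rewrite gmulA, mulgK, gmulVr. Qed.

Lemma invg1 : ginv (@gone G) = gone.
Proof. apply invg_uniq, gmul1l. Qed.

Lemma mulg_conj x1 y1 x2 y2 :
  x1 ** y1 ** (x2 ** y2) = x1 ** (y1 ** x2 ** ginv y1) ** (y1 ** y2).
Proof. now rewrite !gmulA, mulgKV. Qed.

Lemma expgD x a b : gpow x (a + b) = gpow x a ** gpow x b.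
Proof. induction a as [|a IH]; simpl; [now rewrite gmul1l | now rewrite IH, gmulA]. Qed.

Lemma expgM x a b : gpow x (a * b) = gpow (gpow x b) a.
Proof. induction a as [|a IH]; simpl; [reflexivity | now rewrite expgD, IH]. Qed.

Lemma expg1n n : gpow (@gone G) n = gone.
Proof. induction n as [|n IH]; simpl; [reflexivity | now rewrite IH, gmul1l]. Qed.

Lemma expg1 x : gpow x 1 = x.
Proof. apply gmul1r. Qed.

End GroupFacts.

Lemma injective_bounded_le (f : nat -> nat) a b :
  (forall i, i < a -> f i < b) ->
  (forall i j, i < a -> j < a -> f i = f j -> i = j) -> a <= b.
Proof.
  intros Hrange Hinj.
  rewrite <- (length_seq a 0), <- (length_map f (seq 0 a)), <- (length_seq b 0).
  apply NoDup_incl_length.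
  - apply NoDup_map_NoDup_ForallPairs; [|apply seq_NoDup].
    intros i j Hi Hj. apply in_seq in Hi, Hj. apply Hinj; lia.
  - intros k Hk. apply in_map_iff in Hk as [i [<- Hi]].
    apply in_seq in Hi. apply in_seq. specialize (Hrange i). lia.
Qed.

Section Subgroups.
Context {G : Group} (H : G -> Prop) (HS : is_subgroup H).

Lemma subgroup1 : H gone.
Proof. apply HS. Qed.

Lemma subgroupM x y : H x -> H y -> H (x ** y).
Proof. apply HS. Qed.

Lemma subgroupV x : H x -> H (ginv x).
Proof. apply HS. Qed.

Lemma subgroupX x n : H x -> H (gpow x n).
Proof. intro Hx. induction n; simpl; auto using subgroup1, subgroupM. Qed.

Definition same_lcoset (a y : G) : Prop := H (ginv a ** y).

Lemma same_lcoset_mulr a y : same_lcoset a (a ** y) <-> H y.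
Proof. unfold same_lcoset. now rewrite mulKg. Qed.

Lemma same_lcoset_refl a : same_lcoset a a.
Proof. unfold same_lcoset. rewrite gmulVl. apply subgroup1. Qed.

Lemma same_lcoset_sym a b : same_lcoset a b -> same_lcoset b a.
Proof. unfold same_lcoset. intro Hab. apply subgroupV in Hab. now rewrite invMg, invgK in Hab. Qed.

Lemma same_lcoset_trans a b c : same_lcoset a b -> same_lcoset b c -> same_lcoset a c.
Proof.
  unfold same_lcoset. intros Hab Hbc.
  replace (ginv a ** c) with (ginv a ** b ** (ginv b ** c)) by now rewrite gmulA, mulgK.
  now apply subgroupM.
Qed.

Lemma same_lcoset_expg (g : G) i d :
  same_lcoset (gpow g i) (gpow g (i + d)) <-> H (gpow g d).
Proof. rewrite expgD. apply same_lcoset_mulr. Qed.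

Lemma index_ge_distinct p n (f : nat -> G) : has_index H p ->
  (forall i j, i < n -> j < n -> same_lcoset (f i) (f j) -> i = j) -> n <= p.
Proof.
  intros [r [Hcover _]] Hdist.
  destruct (choice _ Hcover) as [c Hc].
  apply (injective_bounded_le (fun i => c (f i))); [intros i _; apply Hc|].
  intros i j Hi Hj Eij. apply Hdist; auto.
  apply (same_lcoset_trans _ (r (c (f i)))); [apply same_lcoset_sym, Hc|].
  rewrite Eij. apply Hc.
Qed.

Lemma index_le_cover p n (f : nat -> G) : has_index H p ->
  (forall y, exists i, i < n /\ same_lcoset (f i) y) -> p <= n.
Proof.
  intros [r [_ Hdist]] Hcover.
  destruct (choice _ Hcover) as [e He].
  apply (injective_bounded_le (fun i => e (r i))); [intros i _; apply He|].
  intros i j Hi Hj Eij. apply Hdist; auto.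
  apply (same_lcoset_trans _ (f (e (r i)))); [apply same_lcoset_sym, He|].
  rewrite Eij. apply He.
Qed.

Section Normal.
Hypothesis HN : forall g h, H h -> H (g ** h ** ginv g).

Lemma same_lcoset_mul a b y z :
  same_lcoset a y -> same_lcoset b z -> same_lcoset (a ** b) (y ** z).
Proof.
  unfold same_lcoset. intros Hay Hbz.
  replace (ginv (a ** b) ** (y ** z))
    with (ginv b ** (ginv a ** y) ** ginv (ginv b) ** (ginv b ** z))
    by now rewrite invgK, invMg, !gmulA, mulgK.
  apply subgroupM; [apply HN|]; assumption.
Qed.

Lemma same_lcoset_inv a y : same_lcoset a y -> same_lcoset (ginv a) (ginv y).
Proof.
  unfold same_lcoset. intro Hay.
  replace (ginv (ginv a) ** ginv y) with (a ** ginv (ginv a ** y) ** ginv a)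
    by now rewrite invMg, invgK, gmulA, mulgK.
  now apply HN, subgroupV.
Qed.

End Normal.
End Subgroups.

Lemma localization_endo_eq {G : Group} (H : G -> Prop) (psi1 psi2 : G -> G) :
  localization H -> endo psi1 -> endo psi2 ->
  (forall x, H x -> psi1 x = psi2 x) -> forall g, psi1 g = psi2 g.
Proof.
  intros Hloc E1 E2 Heq.
  assert (Hhom : hom_on H psi2) by (intros x y _ _; apply E2; trivial).
  apply (proj2 (Hloc psi2 Hhom)); auto.
Qed.

Section TrivialIntersection.
Context {G : Group} (N H : G -> Prop).
Hypothesis HN : normal_in N (fun _ => True).
Hypothesis HS : is_subgroup H.

Definition set_mul (y : G) : Prop := exists a b, N a /\ H b /\ y = a ** b.

Lemma normal_in_meet : normal_in (fun y => N y /\ H y) H.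
Proof.
  destruct HN as [NS [_ Nconj]].
  split; [split; [|split]|split].
  - split; [apply NS | apply (subgroup1 H HS)].
  - intros x y [Nx Hx] [Ny Hy]. split; [apply NS | apply (subgroupM H HS)]; auto.
  - intros x [Nx Hx]. split; [apply NS | apply (subgroupV H HS)]; auto.
  - now intros x [_ Hx].
  - intros k n Hk [Nn Hn]. split; [now apply Nconj|].
    apply (subgroupM H HS); [apply (subgroupM H HS) | apply (subgroupV H HS)]; auto.
Qed.

Lemma set_mul_subgroup : is_subgroup set_mul.
Proof.
  destruct HN as [NS [_ Nconj]].
  split; [|split].
  - exists gone, gone. repeat split; [apply NS | apply (subgroup1 H HS) |].
    symmetry. apply gmul1l.
  - intros ? ? [a1 [b1 [A1 [B1 ->]]]] [a2 [b2 [A2 [B2 ->]]]].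
    exists (a1 ** (b1 ** a2 ** ginv b1)), (b1 ** b2).
    repeat split; [apply NS; auto | apply (subgroupM H HS); auto | apply mulg_conj].
  - intros ? [a [b [A [B ->]]]].
    exists (ginv b ** ginv a ** ginv (ginv b)), (ginv b).
    repeat split; [apply Nconj; auto; apply NS, A | apply (subgroupV H HS); auto |].
    now rewrite mulgKV, invMg.
Qed.

Hypothesis Htriv : forall y, N y -> H y -> y = gone.

Lemma set_mul_uniq a1 b1 a2 b2 : N a1 -> N a2 -> H b1 -> H b2 ->
  a1 ** b1 = a2 ** b2 -> b1 = b2.
Proof.
  destruct HN as [NS _].
  intros A1 A2 B1 B2 E.
  assert (Hswap : ginv a2 ** a1 = b2 ** ginv b1).
  { now rewrite <- (mulgK a1 b1), E, <- (gmulA _ a2), mulKg. }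
  assert (Hone : b2 ** ginv b1 = gone).
  { rewrite <- Hswap. apply Htriv; [apply NS; auto; apply NS, A2|].
    rewrite Hswap. apply (subgroupM H HS); [|apply (subgroupV H HS)]; auto. }
  apply invg_uniq in Hone. now rewrite <- (invgK b1), <- Hone, invgK.
Qed.

Lemma complement_projection : (forall y, set_mul y) ->
  exists pi, endo pi /\ (forall b, H b -> pi b = b) /\ (forall a, N a -> pi a = gone).
Proof.
  destruct HN as [NS _].
  intro Hall.
  assert (Hdecomp : forall y, exists b, H b /\ exists a, N a /\ y = a ** b).
  { intro y. destruct (Hall y) as [a [b [A [B E]]]]. eauto. }
  destruct (choice _ Hdecomp) as [pi Hpi].
  assert (Hproj : forall a b, N a -> H b -> pi (a ** b) = b).
  { intros a b A B. destruct (Hpi (a ** b)) as [B' [a' [A' E]]].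
    symmetry. apply (set_mul_uniq a b a'); auto. }
  exists pi. split; [|split].
  - intros y1 y2 _ _.
    destruct (Hpi y1) as [B1 [a1 [A1 E1]]], (Hpi y2) as [B2 [a2 [A2 E2]]].
    rewrite E1 at 1. rewrite E2 at 1. rewrite mulg_conj.
    apply Hproj; [apply NS; auto | apply (subgroupM H HS); auto].
    apply (proj2 HN); auto.
  - intros b B. rewrite <- (gmul1l _ b) at 1. apply Hproj; auto. apply NS.
  - intros a A. rewrite <- (gmul1r _ a). apply Hproj; auto. apply (subgroup1 H HS).
Qed.

Lemma normal_trivial_meet_trivial : maximal_sub H -> localization H ->
  forall y, N y -> y = gone.
Proof.
  destruct HN as [NS _].
  intros [_ [_ Hmax]] Hloc y Ny.
  destruct (Hmax set_mul set_mul_subgroup) as [Hsub | Hall].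
  - intros b Hb. exists gone, b. repeat split; auto; [apply NS|]. symmetry. apply gmul1l.
  - apply Htriv; auto. apply Hsub. exists y, gone. repeat split; auto; [apply (subgroup1 H HS)|].
    symmetry. apply gmul1r.
  - destruct (complement_projection Hall) as [pi [Epi [HpiH HpiN]]].
    rewrite <- (HpiN y Ny). symmetry.
    apply (localization_endo_eq H pi (fun y => y)); auto.
    intros ? ? _ _. reflexivity.
Qed.

End TrivialIntersection.

(* [m] is the order of [g] modulo [H]; when [H] is normal and maximal, [G/H]
   is the cyclic group generated by [g H]. *)
Section CyclicQuotient.
Context {G : Group} (H : G -> Prop) (HS : is_subgroup H) (g : G) (m : nat).
Hypothesis Hmin : forall k, 0 < k -> k < m -> ~ H (gpow g k).

Lemma expg_distinct_lcosets i j : i < m -> j < m ->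
  same_lcoset H (gpow g i) (gpow g j) -> i = j.
Proof.
  assert (Hle : forall a d, a + d < m ->
    same_lcoset H (gpow g a) (gpow g (a + d)) -> d = 0).
  { intros a d Had Hc. apply same_lcoset_expg in Hc.
    destruct d; [reflexivity|]. exfalso. apply (Hmin (S d)); auto; lia. }
  intros Hi Hj Hc. destruct (le_ge_dec i j) as [L|L].
  - replace j with (i + (j - i)) in Hc, Hj by lia.
    specialize (Hle i (j - i) Hj Hc). lia.
  - apply same_lcoset_sym in Hc; [|exact HS].
    replace i with (j + (i - j)) in Hc, Hi by lia.
    specialize (Hle j (i - j) Hi Hc). lia.
Qed.

Hypothesis Hm : 0 < m.
Hypothesis Hgm : H (gpow g m).

Lemma expg_sub_mult k : H (gpow g k) -> exists q, k = q * m.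
Proof.
  intro Hk. exists (k / m).
  assert (Hdiv : k = k / m * m + k mod m)
    by (rewrite Nat.mul_comm; apply Nat.div_mod; lia).
  destruct (Nat.eq_dec (k mod m) 0) as [E|NE]; [lia|].
  exfalso. apply (Hmin (k mod m)); [lia | apply Nat.mod_upper_bound; lia |].
  rewrite Hdiv, expgD in Hk. rewrite <- (mulKg (gpow g (k / m * m))).
  apply (subgroupM H HS); auto. apply (subgroupV H HS); auto.
  rewrite expgM. apply (subgroupX H HS); auto.
Qed.

Definition expg_lcosets (y : G) : Prop := exists i, same_lcoset H (gpow g i) y.

Hypothesis HN : forall x h, H h -> H (x ** h ** ginv x).

Lemma expg_lcosets_subgroup : is_subgroup expg_lcosets.
Proof.
  split; [|split].
  - exists 0. apply same_lcoset_refl; auto.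
  - intros y z [i Hi] [j Hj]. exists (i + j). rewrite expgD.
    apply same_lcoset_mul; auto.
  - intros y [i Hi]. exists (i * (m - 1)).
    replace (gpow g (i * (m - 1))) with (gpow g (i * m) ** ginv (gpow g i)).
    + rewrite <- (gmul1l _ (ginv y)). apply same_lcoset_mul; auto.
      * unfold same_lcoset. rewrite gmul1r. apply (subgroupV H HS); auto.
        rewrite expgM. apply (subgroupX H HS); auto.
      * apply same_lcoset_inv; auto.
    + replace (i * m) with (i * (m - 1) + i) by nia. now rewrite expgD, mulgK.
Qed.

Lemma expg_lcosets_cover : maximal_sub H -> ~ H g ->
  forall y, exists i, i < m /\ same_lcoset H (gpow g i) y.
Proof.
  intros [_ [_ Hmax]] Hg y.
  destruct (Hmax expg_lcosets expg_lcosets_subgroup) as [Hsub | Hall].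
  - intros h Hh. exists 0. unfold same_lcoset. simpl. now rewrite invg1, gmul1l.
  - exfalso. apply Hg, Hsub. exists 1. rewrite expg1. apply same_lcoset_refl; auto.
  - destruct (Hall y) as [k Hk]. exists (k mod m).
    split; [apply Nat.mod_upper_bound; lia|].
    apply (same_lcoset_trans _ HS _ (gpow g k)); auto.
    rewrite (Nat.div_mod_eq k m) at 2. rewrite Nat.add_comm.
    apply same_lcoset_expg. rewrite Nat.mul_comm, expgM. apply (subgroupX H HS); auto.
Qed.

Lemma index_eq_order p : maximal_sub H -> ~ H g -> has_index H p -> p = m.
Proof.
  intros Hmax Hg Hidx.
  assert (m <= p) by (apply (index_ge_distinct H HS p m (gpow g));
    auto using expg_distinct_lcosets).
  assert (p <= m) by (apply (index_le_cover H HS p m (gpow g));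
    auto using expg_lcosets_cover).
  lia.
Qed.

(* The map [g^i h ↦ x^i]. *)
Lemma cyclic_quotient_endo (x : G) : maximal_sub H -> ~ H g -> gpow x m = gone ->
  exists psi, endo psi /\ (forall h, H h -> psi h = gone) /\ psi g = x.
Proof.
  intros Hmax Hg Hxm.
  assert (Hcover : forall y, exists i, same_lcoset H (gpow g i) y).
  { intro y. destruct (expg_lcosets_cover Hmax Hg y) as [i [_ Hi]]. eauto. }
  destruct (choice _ Hcover) as [d Hd].
  assert (Hwd_le : forall a b y, a <= b -> same_lcoset H (gpow g a) y ->
    same_lcoset H (gpow g b) y -> gpow x a = gpow x b).
  { intros a b y L Ha Hb.
    assert (Hab : same_lcoset H (gpow g a) (gpow g (a + (b - a)))).
    { replace (a + (b - a)) with b by lia.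
      apply (same_lcoset_trans _ HS _ y); auto. apply same_lcoset_sym; auto. }
    apply same_lcoset_expg, expg_sub_mult in Hab as [q Eq].
    replace b with (a + q * m) by lia.
    now rewrite expgD, expgM, Hxm, expg1n, gmul1r. }
  assert (Hwd : forall a b y, same_lcoset H (gpow g a) y ->
    same_lcoset H (gpow g b) y -> gpow x a = gpow x b).
  { intros a b y Ha Hb. destruct (le_ge_dec a b).
    - eauto.
    - symmetry. eauto. }
  exists (fun y => gpow x (d y)). split; [|split].
  - intros y z _ _. rewrite <- expgD.
    apply (Hwd _ _ (y ** z)); [apply Hd|]. rewrite expgD.
    apply same_lcoset_mul; auto.
  - intros h Hh. apply (Hwd _ 0 h); [apply Hd|].
    unfold same_lcoset. simpl. now rewrite invg1, gmul1l.
  - rewrite <- (expg1 x) at 2. apply (Hwd _ 1 g); [apply Hd|].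
    rewrite expg1. apply same_lcoset_refl; auto.
Qed.

End CyclicQuotient.

Lemma exists_expg_sub {G : Group} (H : G -> Prop) p (g : G) :
  is_subgroup H -> has_index H p -> exists k, 0 < k /\ H (gpow g k).
Proof.
  intros HS Hidx. apply NNPP. intro Hnone.
  assert (S p <= p); [|lia].
  apply (index_ge_distinct H HS p (S p) (gpow g)); auto.
  apply expg_distinct_lcosets; auto.
  intros k Hk _ Hgk. apply Hnone. eauto.
Qed.

Lemma normal_maximal_not_localization {G : Group} (H : G -> Prop) p (x : G) :
  (forall g h, H h -> H (g ** h ** ginv g)) -> maximal_sub H ->
  has_index H p -> has_order x p -> localization H -> False.
Proof.
  intros HN Hmax Hidx [_ [Hxp Hxord]] Hloc.
  pose proof Hmax as [HS [[g Hg] _]].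
  destruct (dec_inh_nat_subset_has_unique_least_element
              (fun k => 0 < k /\ H (gpow g k)) (fun k => classic _)
              (exists_expg_sub H p g HS Hidx)) as [m [[[Hm Hgm] Hleast] _]].
  assert (Hmin : forall k, 0 < k -> k < m -> ~ H (gpow g k)).
  { intros k Hk Hkm Hgk. specialize (Hleast k (conj Hk Hgk)). lia. }
  assert (Hm2 : 1 < m).
  { destruct (Nat.eq_dec m 1) as [->|]; [|lia]. now rewrite expg1 in Hgm. }
  assert (p = m) as -> by (apply (index_eq_order H HS g); auto).
  destruct (cyclic_quotient_endo H HS g m Hmin Hm Hgm HN x Hmax Hg Hxp)
    as [psi [Epsi [Hpsi1 Hpsig]]].
  apply (Hxord 1); [lia | lia |].
  rewrite expg1, <- Hpsig.
  apply (localization_endo_eq H psi (fun _ => gone)); auto.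
  intros ? ? _ _. symmetry. apply gmul1l.
Qed.

Theorem proposition4p1 (G : Group) (H : G -> Prop) (p : nat) :
  maximal_sub H -> simple_sub H -> nonabelian_sub H ->
  has_index H p -> (exists x : G, has_order x p) ->
  localization H -> simple_group G.
Proof.
  intros Hmax [HS [[h [Hh hne]] Hsimp]] _ Hidx [x Hx] Hloc.
  split; [|split].
  - repeat split.
  - exists h. auto.
  - intros N HN.
    destruct (Hsimp _ (normal_in_meet N H HN HS)) as [Htriv | HsubN].
    + left. apply (normal_trivial_meet_trivial N H HN HS); auto.
    + right. pose proof HN as [NS [_ Nconj]].
      destruct (proj2 (proj2 Hmax) N NS (fun y Hy => proj1 (HsubN y Hy)))
        as [NsubH | Nall]; [exfalso | auto].
      apply (normal_maximal_not_localization H p x); auto.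
      intros g k Hk. apply NsubH, Nconj; auto. apply HsubN, Hk.
Qed.
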